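(* Let $\mathcal C$ be a Markov category with conditionals, let $p\colon I\to X$ be a state, and let $E$ be an object. The assignment $(m,k)\mapsto (k\otimes\mathrm{id}_E)\circ\mathrm{copy}_E\circ m$ induces a bijection between (a) pairs $(m,[k])$ where $m\colon I\to E$ is a state and $[k]$ is an equivalence class of morphisms $k\colon E\to X$ modulo $m$-almost sure equality such that $k\circ m=p$ for each $k\in[k]$; and (b) dilations of $p$ with environment $E$.
   Context: A Markov category is a symmetric monoidal category $(\mathcal C,\otimes,I)$ with commutative comonoids $\mathrm{copy}_X\colon X\to X\otimes X$, $\mathrm{del}_X\colon X\to I$ compatible with $\otimes$, with $I$ terminal; a state is a morphism out of $I$. A dilation of $p\colon A\to X$ with environment $E$ is $\pi\colon A\to X\otimes E$ with $(\mathrm{id}_X\otimes\mathrm{del}_E)\circ\pi=p$. For $m\colon\Theta\to E$ and $k,k'\colon E\to X$, $k$ and $k'$ are $m$-almost surely equal if $(\mathrm{id}_E\otimes k)\circ\mathrm{copy}_E\circ m=(\mathrm{id}_E\otimes k')\circ\mathrm{copy}_E\circ m$. For $f\colon A\to X\otimes Y$ with $f_X=(\mathrm{id}_X\otimes\mathrm{del}_Y)\circ f$, a conditional of $f$ given $X$ is $f_{|X}\colon X\otimes A\to Y$ with $f=(\mathrm{id}_X\otimes f_{|X})\circ(\mathrm{copy}_X\otimes\mathrm{id}_A)\circ(f_X\otimes\mathrm{id}_A)\circ\mathrm{copy}_A$; $\mathcal C$ has conditionals if every such $f$ (for all objects, in either order of the factors via the symmetry) has one. *)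

From mathcomp Require Import ssreflect ssrfun ssrbool.

Set Implicit Arguments.
Unset Strict Implicit.

Record MarkovData := {
  ob : Type;
  hom : ob -> ob -> Type;
  comp : forall A B C : ob, hom B C -> hom A B -> hom A C;
  idm : forall A : ob, hom A A;
  tens : ob -> ob -> ob;
  tensm : forall A B C D : ob, hom A B -> hom C D -> hom (tens A C) (tens B D);
  unit : ob;
  assoc : forall A B C : ob, hom (tens (tens A B) C) (tens A (tens B C));
  assoc_inv : forall A B C : ob, hom (tens A (tens B C)) (tens (tens A B) C);
  lunit : forall A : ob, hom (tens unit A) A;
  lunit_inv : forall A : ob, hom A (tens unit A);
  runit : forall A : ob, hom (tens A unit) A;
  runit_inv : forall A : ob, hom A (tens A unit);
  swap : forall A B : ob, hom (tens A B) (tens B A);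
  copy : forall A : ob, hom A (tens A A);
  del : forall A : ob, hom A unit
}.

Arguments ob : clear implicits.
Arguments hom : clear implicits.
Arguments comp {m A B C} g f.
Arguments idm {m} A.
Arguments tens {m} A B.
Arguments tensm {m A B C D} f g.
Arguments unit {m}.
Arguments assoc {m} A B C.
Arguments assoc_inv {m} A B C.
Arguments lunit {m} A.
Arguments lunit_inv {m} A.
Arguments runit {m} A.
Arguments runit_inv {m} A.
Arguments swap {m} A B.
Arguments copy {m} A.
Arguments del {m} A.

Definition middle_swap (M : MarkovData) (A B : ob M) :
  hom M (tens (tens A A) (tens B B)) (tens (tens A B) (tens A B)) :=
  comp (assoc_inv A B (tens A B))
  (comp (tensm (idm A) (assoc B A B))
  (comp (tensm (idm A) (tensm (swap A B) (idm B)))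
  (comp (tensm (idm A) (assoc_inv A B B))
        (assoc A A (tens B B))))).

Record MarkovAxioms (M : MarkovData) : Prop := {
  comp_idl : forall (A B : ob M) (f : hom M A B), comp (idm B) f = f;
  comp_idr : forall (A B : ob M) (f : hom M A B), comp f (idm A) = f;
  comp_assoc : forall (A B C D : ob M) (h : hom M C D) (g : hom M B C) (f : hom M A B),
      comp h (comp g f) = comp (comp h g) f;
  tensm_id : forall A B : ob M, tensm (idm A) (idm B) = idm (tens A B);
  tensm_comp : forall (A B C A' B' C' : ob M) (g : hom M B C) (f : hom M A B)
      (g' : hom M B' C') (f' : hom M A' B'),
      tensm (comp g f) (comp g' f') = comp (tensm g g') (tensm f f');
  assoc_iso1 : forall A B C : ob M, comp (assoc A B C) (assoc_inv A B C) = idm _;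
  assoc_iso2 : forall A B C : ob M, comp (assoc_inv A B C) (assoc A B C) = idm _;
  lunit_iso1 : forall A : ob M, comp (lunit A) (lunit_inv A) = idm _;
  lunit_iso2 : forall A : ob M, comp (lunit_inv A) (lunit A) = idm _;
  runit_iso1 : forall A : ob M, comp (runit A) (runit_inv A) = idm _;
  runit_iso2 : forall A : ob M, comp (runit_inv A) (runit A) = idm _;
  swap_invol : forall A B : ob M, comp (swap B A) (swap A B) = idm _;
  assoc_nat : forall (A A' B B' C C' : ob M) (f : hom M A A') (g : hom M B B') (h : hom M C C'),
      comp (assoc A' B' C') (tensm (tensm f g) h) = comp (tensm f (tensm g h)) (assoc A B C);
  lunit_nat : forall (A A' : ob M) (f : hom M A A'),
      comp (lunit A') (tensm (idm unit) f) = comp f (lunit A);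
  runit_nat : forall (A A' : ob M) (f : hom M A A'),
      comp (runit A') (tensm f (idm unit)) = comp f (runit A);
  swap_nat : forall (A A' B B' : ob M) (f : hom M A A') (g : hom M B B'),
      comp (swap A' B') (tensm f g) = comp (tensm g f) (swap A B);
  pentagon : forall A B C D : ob M,
      comp (assoc A B (tens C D)) (assoc (tens A B) C D)
      = comp (tensm (idm A) (assoc B C D))
          (comp (assoc A (tens B C) D) (tensm (assoc A B C) (idm D)));
  triangle : forall A B : ob M,
      comp (tensm (idm A) (lunit B)) (assoc A unit B) = tensm (runit A) (idm B);
  hexagon : forall A B C : ob M,
      comp (assoc B C A) (comp (swap A (tens B C)) (assoc A B C))
      = comp (tensm (idm B) (swap A C)) (comp (assoc B A C) (tensm (swap A B) (idm C)));
  copy_counit_l : forall A : ob M, comp (tensm (del A) (idm A)) (copy A) = lunit_inv A;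
  copy_counit_r : forall A : ob M, comp (tensm (idm A) (del A)) (copy A) = runit_inv A;
  copy_coassoc : forall A : ob M,
      comp (assoc A A A) (comp (tensm (copy A) (idm A)) (copy A))
      = comp (tensm (idm A) (copy A)) (copy A);
  copy_comm : forall A : ob M, comp (swap A A) (copy A) = copy A;
  copy_tens : forall A B : ob M,
      copy (tens A B) = comp (middle_swap A B) (tensm (copy A) (copy B));
  del_tens : forall A B : ob M,
      del (tens A B) = comp (lunit unit) (tensm (del A) (del B));
  copy_unit : copy (@unit M) = lunit_inv unit;
  del_unit : del (@unit M) = idm unit;
  unit_terminal : forall (A : ob M) (f g : hom M A unit), f = g
}.

Record MarkovCategory := {
  mdata :> MarkovData;
  maxioms : MarkovAxioms mdata
}.

Section Notions.
Variable M : MarkovCategory.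

Definition marginal1 (A X Y : ob M) (f : hom M A (tens X Y)) : hom M A X :=
  comp (runit X) (comp (tensm (idm X) (del Y)) f).

Definition is_dilation (A X E : ob M) (p : hom M A X) (pi : hom M A (tens X E)) : Prop :=
  marginal1 pi = p.

Definition ae_eq (Th E X : ob M) (m : hom M Th E) (k k' : hom M E X) : Prop :=
  comp (tensm (idm E) k) (comp (copy E) m) = comp (tensm (idm E) k') (comp (copy E) m).

Definition is_conditional (A X Y : ob M) (f : hom M A (tens X Y)) (g : hom M (tens X A) Y) : Prop :=
  f = comp (tensm (idm X) g)
        (comp (assoc X X A)
        (comp (tensm (copy X) (idm A))
        (comp (tensm (marginal1 f) (idm A)) (copy A)))).

(** Every morphism into a tensor product has a conditional (conditionals
    given the second factor are obtained by precomposing with the symmetry,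
    which is covered since X, Y range over all objects). *)
Definition has_conditionals : Prop :=
  forall (A X Y : ob M) (f : hom M A (tens X Y)), exists g, is_conditional f g.

Definition is_ae_class (Th E X : ob M) (m : hom M Th E) (Cl : hom M E X -> Prop) : Prop :=
  (exists k, Cl k) /\ (forall k k', Cl k -> (Cl k' <-> ae_eq m k k')).

Definition PairClass (X : ob M) (p : hom M unit X) (E : ob M) : Type :=
  { mc : hom M unit E * (hom M E X -> Prop) |
    is_ae_class mc.1 mc.2 /\ (forall k, mc.2 k -> comp k mc.1 = p) }.

Definition Dilation (X : ob M) (p : hom M unit X) (E : ob M) : Type :=
  { pi : hom M unit (tens X E) | is_dilation p pi }.

Definition dil_of (X E : ob M) (m : hom M unit E) (k : hom M E X) : hom M unit (tens X E) :=
  comp (tensm k (idm E)) (comp (copy E) m).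

End Notions.

Arguments has_conditionals : clear implicits.

(* A state on X ⊗ E is recovered from its E-marginal m and a conditional k of
   X given E as (k ⊗ id) ∘ copy ∘ m; conditionals exist by hypothesis, so every
   dilation arises this way.  Two such representations (m, k), (m', k') agree
   exactly when m = m' (take E-marginals) and k, k' are m-a.s. equal (cancel
   the symmetry), and the X-marginal of (k ⊗ id) ∘ copy ∘ m is k ∘ m.  Hence
   (m, [k]) ↦ (k ⊗ id) ∘ copy ∘ m is well defined, injective and surjective. *)
From mathcomp Require Import ssreflect ssrfun ssrbool.
From Stdlib Require Import ClassicalEpsilon FunctionalExtensionality.
From Stdlib Require Import PropExtensionality ProofIrrelevance.

Set Implicit Arguments.
Unset Strict Implicit.

Lemma bijective_inj_surj (A B : Type) (f : A -> B) :
  injective f -> (forall b, exists a, f a = b) -> bijective f.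
Proof.
move=> f_inj f_surj.
pose g b := proj1_sig (constructive_indefinite_description _ (f_surj b)).
have gK : cancel g f by move=> b; rewrite /g; case: constructive_indefinite_description.
by exists g => // a; apply: f_inj; rewrite gK.
Qed.

Section Dilations.
Variable M : MarkovCategory.
Local Notation ax := (maxioms M).
Local Notation compA := (comp_assoc ax).
Local Notation comp1f := (comp_idl ax).
Local Notation compf1 := (comp_idr ax).
Local Notation tensmM := (tensm_comp ax).

Lemma tensm_unit_inj (A B : ob M) (f g : hom M A B) :
  tensm f (idm unit) = tensm g (idm unit) -> f = g.
Proof.
move=> fg.
have fgr : comp f (runit A) = comp g (runit A) by rewrite -!(runit_nat ax) fg.
by rewrite -(compf1 f) -(runit_iso1 ax) compA fgr -compA (runit_iso1 ax) compf1.
Qed.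

(* Kelly's coherence lemma, derived from the pentagon and the triangle. *)
Lemma runit_assoc (A B : ob M) :
  comp (tensm (idm A) (runit B)) (assoc A B unit) = runit (tens A B).
Proof.
apply: tensm_unit_inj; rewrite -(triangle ax).
have lunit_conj : tensm (idm (tens A B)) (lunit (@unit M)) =
    comp (assoc_inv A B unit)
      (comp (tensm (idm A) (tensm (idm B) (lunit unit))) (assoc A B (tens unit unit))).
  by rewrite -(assoc_nat ax) compA (assoc_iso2 ax) comp1f (tensm_id ax).
rewrite lunit_conj -!compA (pentagon ax).
rewrite [comp (tensm (idm A) (tensm _ _)) (comp (tensm (idm A) (assoc _ _ _)) _)]compA.
rewrite -tensmM comp1f (triangle ax).
rewrite [comp (tensm (idm A) _) (comp (assoc _ _ _) _)]compA.
rewrite -(assoc_nat ax) -compA (compA (assoc_inv _ _ _)) (assoc_iso2 ax) comp1f.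
by rewrite -tensmM comp1f.
Qed.

Lemma assoc_runit_inv (A B : ob M) :
  comp (assoc A B unit) (runit_inv (tens A B)) = tensm (idm A) (runit_inv B).
Proof.
rewrite -(comp1f (comp _ _)) -(tensm_id ax) -(runit_iso2 ax) -[idm A]comp1f tensmM.
by rewrite -compA (compA (tensm _ (runit B))) runit_assoc (runit_iso1 ax) compf1 comp1f.
Qed.

Lemma runit_inv_nat (A A' : ob M) (f : hom M A A') :
  comp (tensm f (idm unit)) (runit_inv A) = comp (runit_inv A') f.
Proof.
rewrite -[comp (tensm _ _) _]comp1f -(runit_iso2 ax) -compA (compA (runit _)).
by rewrite (runit_nat ax) -compA (runit_iso1 ax) compf1.
Qed.

Lemma copy_unit_runit : copy (@unit M) = runit_inv unit.
Proof. by rewrite -(copy_counit_r ax) (del_unit ax) (tensm_id ax) comp1f. Qed.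

Definition marginal2 (A X Y : ob M) (f : hom M A (tens X Y)) : hom M A Y :=
  comp (lunit Y) (comp (tensm (del X) (idm Y)) f).

Lemma dil_of_swap (X E : ob M) (m : hom M unit E) (k : hom M E X) :
  dil_of m k = comp (swap E X) (comp (tensm (idm E) k) (comp (copy E) m)).
Proof.
by rewrite /dil_of [in RHS]compA (swap_nat ax) -compA (compA (swap E E)) (copy_comm ax).
Qed.

Lemma marginal1_dil_of (X E : ob M) (m : hom M unit E) (k : hom M E X) :
  marginal1 (dil_of m k) = comp k m.
Proof.
rewrite /marginal1 /dil_of (compA (tensm _ _) (tensm _ _)) -tensmM comp1f compf1.
rewrite -[k]compf1 -[del E]comp1f tensmM -compA (compA (tensm _ _) (copy E)).
by rewrite (copy_counit_r ax) !compA (runit_nat ax) -(compA k) (runit_iso1 ax).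
Qed.

Lemma marginal2_dil_of (X E : ob M) (m : hom M unit E) (k : hom M E X) :
  marginal2 (dil_of m k) = m.
Proof.
rewrite /marginal2 /dil_of (compA (tensm _ _) (tensm _ _)) -tensmM comp1f.
rewrite (unit_terminal ax (comp (del X) k) (del E)) (compA (tensm _ _)).
by rewrite (copy_counit_l ax) compA (lunit_iso1 ax) comp1f.
Qed.

Lemma ae_eq_dil_of (X E : ob M) (m : hom M unit E) (k k' : hom M E X) :
  ae_eq m k k' <-> dil_of m k = dil_of m k'.
Proof.
rewrite /ae_eq !dil_of_swap; split=> [-> // | kk'].
by have := f_equal (comp (swap X E)) kk'; rewrite !compA (swap_invol ax) !comp1f.
Qed.

(* Take k := g ∘ ρ⁻¹ for a conditional g of the swapped state given E. *)
Lemma dil_of_surj (HC : has_conditionals M) (X E : ob M) (pi : hom M unit (tens X E)) :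
  exists m k, pi = dil_of m k.
Proof.
have [g g_cond] := HC _ _ _ (comp (swap X E) pi).
set m := marginal1 (comp (swap X E) pi) in g_cond.
exists m, (comp g (runit_inv E)).
rewrite dil_of_swap -[pi]comp1f -(swap_invol ax) -compA g_cond; congr (comp _ _).
rewrite copy_unit_runit (runit_inv_nat m) (compA (tensm (copy E) _)).
rewrite (runit_inv_nat (copy E)) -compA (compA (assoc _ _ _)).
by rewrite assoc_runit_inv compA -tensmM comp1f.
Qed.

Variables (X : ob M) (p : hom M unit X) (E : ob M).

Definition pc_state (a : PairClass p E) : hom M unit E := (proj1_sig a).1.
Definition pc_class (a : PairClass p E) : hom M E X -> Prop := (proj1_sig a).2.

Definition pc_rep (a : PairClass p E) : hom M E X :=
  proj1_sig (constructive_indefinite_description _ (proj1 (proj1 (proj2_sig a)))).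

Lemma pc_repP (a : PairClass p E) : pc_class a (pc_rep a).
Proof. by rewrite /pc_rep; case: constructive_indefinite_description. Qed.

Lemma pc_classE (a : PairClass p E) (k0 k : hom M E X) : pc_class a k0 ->
  pc_class a k <-> dil_of (pc_state a) k0 = dil_of (pc_state a) k.
Proof. by move=> ak0; rewrite -ae_eq_dil_of; apply: (proj2 (proj1 (proj2_sig a))). Qed.

Lemma pc_ext (a b : PairClass p E) : pc_state a = pc_state b ->
  (forall k, pc_class a k <-> pc_class b k) -> a = b.
Proof.
case: a b => [[ma Ca] Ha] [[mb Cb] Hb]; rewrite /pc_state /pc_class /= => mab Cab.
have CaCb : Ca = Cb.
  by apply: functional_extensionality => k; apply: propositional_extensionality.
subst mb Cb; congr (exist _ _ _); apply: proof_irrelevance.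
Qed.

Lemma pc_dilation (a : PairClass p E) : is_dilation p (dil_of (pc_state a) (pc_rep a)).
Proof. by rewrite /is_dilation marginal1_dil_of; apply: (proj2 (proj2_sig a)); apply: pc_repP. Qed.

Definition dil_of_pair (a : PairClass p E) : Dilation p E := exist _ _ (pc_dilation a).

Lemma dil_of_pairE (a : PairClass p E) (k : hom M E X) :
  pc_class a k -> proj1_sig (dil_of_pair a) = dil_of (pc_state a) k.
Proof. by move=> ak; apply: (proj1 (pc_classE k (pc_repP a))). Qed.

Lemma dil_of_pair_inj : injective dil_of_pair.
Proof.
move=> a b /(f_equal (@proj1_sig _ _)).
rewrite (dil_of_pairE (pc_repP a)) (dil_of_pairE (pc_repP b)) => ab.
have mab : pc_state a = pc_state b.
  by rewrite -(marginal2_dil_of (pc_state a) (pc_rep a)) ab marginal2_dil_of.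
apply: pc_ext => // k.
by rewrite (pc_classE _ (pc_repP a)) (pc_classE _ (pc_repP b)) ab mab.
Qed.

Definition ae_pair (m : hom M unit E) (k : hom M E X) (mk_dil : is_dilation p (dil_of m k)) :
  PairClass p E.
Proof.
refine (exist _ (m, ae_eq m k) _); split; first split.
- by exists k; rewrite /ae_eq.
- by move=> k1 k2 /= /ae_eq_dil_of kk1; rewrite !ae_eq_dil_of kk1.
- by move=> k' /= /ae_eq_dil_of kk'; rewrite -marginal1_dil_of -kk'.
Defined.

Lemma dil_of_pair_surj (HC : has_conditionals M) (d : Dilation p E) :
  exists a, dil_of_pair a = d.
Proof.
case: d => pi pi_dil; have [m [k pi_mk]] := dil_of_surj HC pi; subst pi.
exists (ae_pair pi_dil); apply: eq_sig_hprop => [x u v | ]; first exact: proof_irrelevance.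
by apply: (dil_of_pairE (a := ae_pair pi_dil)); rewrite /pc_class /ae_eq.
Qed.

End Dilations.

Theorem proposition1p13 (M : MarkovCategory) (HC : has_conditionals M)
  (X : ob M) (p : hom M unit X) (E : ob M) :
  exists F : PairClass p E -> Dilation p E,
    bijective F /\
    (forall (a : PairClass p E) (k : hom M E X),
        (proj1_sig a).2 k -> proj1_sig (F a) = dil_of (proj1_sig a).1 k).
Proof.
exists (@dil_of_pair M X p E); split; last exact: dil_of_pairE.
apply: bijective_inj_surj; [exact: dil_of_pair_inj | exact: dil_of_pair_surj].
Qed.
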